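(* Let $f=\frac1n\sum_{i=1}^n f_i$ be convex, and suppose each $f_i$ is $L_i$-smooth for some $L_i>0$. Let $L=\max_{1\le i\le n}L_i$, let $\mu\in(0,1/L]$, and let the integers $t(k)\ge1$ satisfy $\sum_{k=0}^\infty\beta^{t(k)}<\infty$. Let $\{\mathbf{x}_k\}$ be generated by NEAR-DGD$^+$ from an arbitrary initial point. Then $$f\Big(\frac1T\sum_{k=0}^{T-1}\bar x_k\Big)-f^*=O\Big(\frac1T\Big)\qquad\text{for } T\in\mathbb{N},$$ i.e. there is a constant $C>0$ independent of $T$ bounding $T$ times the left-hand side.
   Context: Let $n,p\in\mathbb{N}$. $W=(w_{ij})$ is an $n\times n$ doubly stochastic matrix whose associated directed graph is strongly connected and has a self-loop at every vertex ($w_{ii}>0$). $1_n\in\mathbb{R}^n$ is the all-ones vector, and $\beta\in[0,1)$ denotes the spectral norm of $W-\frac1n1_n1_n^\top$. Local costs $f_i:\mathbb{R}^p\to\mathbb{R}$ are differentiable, $f=\frac1n\sum_i f_i$, $f^*=\min f$, and the set of minimizers $X^*$ is assumed nonempty. A function $h$ is $L$-smooth if $\|\nabla h(x)-\nabla h(y)\|\le L\|x-y\|$ for all $x,y$. For $\mathbf{x}=(x_1^\top,\dots,x_n^\top)^\top\in\mathbb{R}^{np}$ put $\nabla F(\mathbf{x})=(\nabla f_1(x_1)^\top,\dots,\nabla f_n(x_n)^\top)^\top$. NEAR-DGD$^+$: $\mathbf{x}_{k+1}=(W^{t(k)}\otimes I_p)(\mathbf{x}_k-\mu\nabla F(\mathbf{x}_k))$,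 $k\ge0$ ($\otimes$ Kronecker product). With $\mathbf{x}_k=(x_{1,k}^\top,\dots,x_{n,k}^\top)^\top$, $\bar x_k=\frac1n\sum_i x_{i,k}$. $\|\cdot\|$ is the Euclidean norm. *)

From HB Require Import structures.
From mathcomp Require Import all_boot all_order all_algebra.
From mathcomp Require Import all_classical all_reals all_analysis.
Set Implicit Arguments. Unset Strict Implicit. Unset Printing Implicit Defensive.
Import Order.TTheory GRing.Theory Num.Theory.
Import numFieldNormedType.Exports.
Local Open Scope classical_set_scope.
Local Open Scope ring_scope.

Definition enorm {R : realType} {m k : nat} (A : 'M[R]_(m, k)) : R :=
  Num.sqrt (\sum_(i < m) \sum_(j < k) A i j ^+ 2).

Definition dotp {R : realType} {p : nat} (u v : 'rV[R]_p) : R :=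
  \sum_(j < p) u 0 j * v 0 j.

Definition specnorm {R : realType} {n : nat} (M : 'M[R]_n) : R :=
  sup [set enorm (M *m v) | v in [set v : 'cV[R]_n | enorm v <= 1]].

Definition doubly_stochastic {R : realType} {n : nat} (W : 'M[R]_n) : Prop :=
  (forall i j, 0 <= W i j) /\
  (forall i, \sum_(j < n) W i j = 1) /\
  (forall j, \sum_(i < n) W i j = 1).

Definition strongly_connected {R : realType} {n : nat} (W : 'M[R]_n) : Prop :=
  forall i j : 'I_n, connect (fun a b => 0 < W a b) i j.

Definition is_gradient {R : realType} {p : nat} (h : 'rV[R]_p -> R)
    (g : 'rV[R]_p -> 'rV[R]_p) : Prop :=
  forall x, differentiable h x /\ forall v, 'd h x v = dotp (g x) v.

Definition convex_fun {R : realType} {p : nat} (h : 'rV[R]_p -> R) : Prop :=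
  forall (a : R) (x y : 'rV[R]_p), 0 <= a <= 1 ->
    h (a *: x + (1 - a) *: y) <= a * h x + (1 - a) * h y.

Definition smooth_grad {R : realType} {p : nat} (g : 'rV[R]_p -> 'rV[R]_p) (L : R) : Prop :=
  forall x y, enorm (g x - g y) <= L * enorm (x - y).

(* NEAR-DGD+ : x_{k+1} = (W^{t(k)} (x) I_p)(x_k - mu grad F(x_k)), written blockwise. *)
Definition near_dgd_plus {R : realType} {n p : nat} (W : 'M[R]_n) (t : nat -> nat)
    (mu : R) (g : 'I_n -> 'rV[R]_p -> 'rV[R]_p) (x : nat -> 'I_n -> 'rV[R]_p) : Prop :=
  forall k i, x k.+1 i = \sum_(j < n) (W ^+ t k) i j *: (x k j - mu *: g j (x k j)).

From HB Require Import structures.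
From mathcomp Require Import all_boot all_order all_algebra.
From mathcomp Require Import all_classical all_reals all_analysis.
From mathcomp Require Import ring lra.
Import Order.TTheory GRing.Theory Num.Theory.
Import numFieldNormedType.Exports.
Local Open Scope classical_set_scope.
Local Open Scope ring_scope.
Set Implicit Arguments. Unset Strict Implicit. Unset Printing Implicit Defensive.

(* The network average xbar_k runs an inexact gradient method on f:
   xbar_(k+1) = xbar_k - mu (grad f(xbar_k) + e_k) with |e_k| <= L D_k, where D_k
   is the consensus deviation sqrt (sum_i |x_(k,i) - xbar_k|^2).  Because W is doubly
   stochastic, W^t - J = (W - J)^t, so one round of mixing shrinks the deviation by
   beta^(t(k)): D_(k+1) <= n beta^(t(k)) (2 D_k + 2 |xbar_k - xs| + c0), where
   c0 = |xs| + mu sum_j |grad f_j(xs)| and xs is a minimizer.  For a convex L-smooth f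
   and mu L <= 1 an inexact gradient step satisfies
     f(xbar_(k+1)) - f(xs) <= (|xbar_k - xs|^2 - |xbar_(k+1) - xs|^2) / (2 mu)
                              + 2 |xbar_k - xs| |e_k| + mu |e_k|^2
   and |xbar_(k+1) - xs| <= |xbar_k - xs| + 2 mu |e_k|.  Hence the potential
   |xbar_k - xs| + 2 D_k + c0 grows at most by the factors 1 + 4 n beta^(t(k)), whose
   product is bounded since sum_k beta^(t(k)) < oo.  So sum_k D_k and sum_k |e_k| are
   finite, the telescoping sum bounds sum_(k<T) (f(xbar_k) - f(xs)) uniformly in T, and
   Jensen's inequality for f gives the O(1/T) rate for the ergodic average. *)


Section FrobeniusNorm.
Context {R : realType} {m k : nat}.
Implicit Types (A B C : 'M[R]_(m, k)) (a : R).

Definition mxdot A B : R := \sum_(i < m) \sum_(j < k) A i j * B i j.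

Lemma mxdotC A B : mxdot A B = mxdot B A.
Proof. by apply: eq_bigr => i _; apply: eq_bigr => j _; rewrite mulrC. Qed.

Lemma mxdotDl A B C : mxdot (A + B) C = mxdot A C + mxdot B C.
Proof.
rewrite /mxdot -big_split; apply: eq_bigr => i _; rewrite -big_split.
by apply: eq_bigr => j _; rewrite !mxE mulrDl.
Qed.

Lemma mxdotZl a A C : mxdot (a *: A) C = a * mxdot A C.
Proof.
rewrite /mxdot mulr_sumr; apply: eq_bigr => i _; rewrite mulr_sumr.
by apply: eq_bigr => j _; rewrite !mxE mulrA.
Qed.

Lemma mxdot0l C : mxdot 0 C = 0.
Proof. by rewrite -(scale0r 0) mxdotZl mul0r. Qed.

Lemma mxdotNl A C : mxdot (- A) C = - mxdot A C.
Proof. by rewrite -scaleN1r mxdotZl mulN1r. Qed.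

Lemma mxdotBl A B C : mxdot (A - B) C = mxdot A C - mxdot B C.
Proof. by rewrite mxdotDl mxdotNl. Qed.

Lemma mxdotDr A B C : mxdot C (A + B) = mxdot C A + mxdot C B.
Proof. by rewrite mxdotC mxdotDl !(mxdotC C). Qed.

Lemma mxdotZr a A C : mxdot C (a *: A) = a * mxdot C A.
Proof. by rewrite mxdotC mxdotZl mxdotC. Qed.

Lemma mxdotBr A B C : mxdot C (A - B) = mxdot C A - mxdot C B.
Proof. by rewrite mxdotC mxdotBl !(mxdotC C). Qed.

Lemma mxdot_suml I (r : seq I) (P : pred I) (F : I -> 'M[R]_(m, k)) B :
  mxdot (\sum_(i <- r | P i) F i) B = \sum_(i <- r | P i) mxdot (F i) B.
Proof.
by elim/big_rec2: _ => [|i y1 y2 _ <-]; rewrite ?mxdot0l ?mxdotDl.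
Qed.

Lemma enorm_sqr A : enorm A ^+ 2 = mxdot A A.
Proof.
have -> : mxdot A A = \sum_(i < m) \sum_(j < k) A i j ^+ 2.
  by apply: eq_bigr => i _; apply: eq_bigr => j _; rewrite expr2.
by rewrite sqr_sqrtr // !sumr_ge0 // => i _; rewrite sumr_ge0 // => j _; rewrite sqr_ge0.
Qed.

Lemma enorm_ge0 A : 0 <= enorm A.
Proof. exact: sqrtr_ge0. Qed.

Lemma mxdot_ge0 A : 0 <= mxdot A A.
Proof. by rewrite -enorm_sqr sqr_ge0. Qed.

Lemma enorm_eq0 A : enorm A = 0 -> A = 0.
Proof.
move=> A0; have : mxdot A A = 0 by rewrite -enorm_sqr A0 expr0n.
have row_ge0 i : 0 <= \sum_(j < k) A i j * A i j.
  by rewrite sumr_ge0 // => j _; rewrite -expr2 sqr_ge0.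
move/(psumr_eq0P (fun i _ => row_ge0 i)) => Arows; apply/matrixP => i j.
have sq_ge0 j' : 0 <= A i j' * A i j' by rewrite -expr2 sqr_ge0.
move: (Arows i isT) => /(psumr_eq0P (fun j _ => sq_ge0 j)) /(_ j isT) /eqP.
by rewrite mxE mulf_eq0 orbb => /eqP.
Qed.

Lemma enorm0 : enorm (0 : 'M[R]_(m, k)) = 0.
Proof. by apply/eqP; rewrite -sqrf_eq0 enorm_sqr mxdot0l. Qed.

Lemma mxdot_le A B : mxdot A B <= enorm A * enorm B.
Proof.
have [/enorm_eq0 ->|an0] := eqVneq (enorm A) 0; first by rewrite mxdot0l enorm0 mul0r.
have [/enorm_eq0 ->|bn0] := eqVneq (enorm B) 0.
  by rewrite mxdotC mxdot0l enorm0 mulr0.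
have ab_gt0 : 0 < enorm A * enorm B by rewrite mulr_gt0 // lt_def ?an0 ?bn0 enorm_ge0.
have := mxdot_ge0 (enorm B *: A - enorm A *: B).
rewrite !(mxdotBl, mxdotBr, mxdotZl, mxdotZr) -!enorm_sqr (mxdotC B) => key.
rewrite -subr_ge0 -(pmulr_rge0 _ ab_gt0); nra.
Qed.

Lemma enormZ a A : enorm (a *: A) = `|a| * enorm A.
Proof.
apply/eqP; rewrite -(@eqrXn2 _ 2) ?mulr_ge0 ?enorm_ge0 //.
by rewrite exprMn !enorm_sqr mxdotZl mxdotZr mulrA -expr2 real_normK ?num_real.
Qed.

Lemma enormN A : enorm (- A) = enorm A.
Proof. by rewrite -scaleN1r enormZ normrN1 mul1r. Qed.

Lemma enorm_subZ_sqr a A B :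
  enorm (A - a *: B) ^+ 2 = enorm A ^+ 2 - 2 * a * mxdot B A + a ^+ 2 * enorm B ^+ 2.
Proof. by rewrite !enorm_sqr mxdotBl !mxdotBr !mxdotZl !mxdotZr (mxdotC A B); ring. Qed.

Lemma mxdot_sqr_le A B : mxdot A B ^+ 2 <= enorm A ^+ 2 * enorm B ^+ 2.
Proof.
have := mxdot_le A B; have := mxdot_le (- A) B.
rewrite mxdotNl enormN -exprMn; have := enorm_ge0 A; have := enorm_ge0 B.
nra.
Qed.

Lemma enormD A B : enorm (A + B) <= enorm A + enorm B.
Proof.
rewrite -(@ler_pXn2r _ 2) ?nnegrE ?addr_ge0 ?enorm_ge0 //.
rewrite enorm_sqr mxdotDl !mxdotDr (mxdotC B) -!enorm_sqr.
by have := mxdot_le A B; lra.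
Qed.

Lemma enorm_sum I (r : seq I) (P : pred I) (F : I -> 'M[R]_(m, k)) :
  enorm (\sum_(i <- r | P i) F i) <= \sum_(i <- r | P i) enorm (F i).
Proof.
elim/big_rec2: _ => [|i y1 y2 _ h]; first by rewrite enorm0.
by apply: le_trans (enormD _ _) _; rewrite lerD2l.
Qed.

End FrobeniusNorm.

Section MatrixNorms.
Context {R : realType}.

Lemma mxdot_row_sum m k (A B : 'M[R]_(m, k)) :
  mxdot A B = \sum_(i < m) mxdot (row i A) (row i B).
Proof.
by apply: eq_bigr => i _; rewrite /mxdot big_ord1; apply: eq_bigr => j _; rewrite !mxE.
Qed.

Lemma mxdot_col_sum m k (A B : 'M[R]_(m, k)) :
  mxdot A B = \sum_(j < k) mxdot (col j A) (col j B).
Proof.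
rewrite /mxdot exchange_big; apply: eq_bigr => j _.
by rewrite exchange_big big_ord1; apply: eq_bigr => i _; rewrite !mxE.
Qed.

Lemma mxdot_tr m k (A B : 'M[R]_(m, k)) : mxdot A^T B^T = mxdot A B.
Proof.
by rewrite /mxdot exchange_big; apply: eq_bigr => i _; apply: eq_bigr => j _; rewrite !mxE.
Qed.

Lemma enorm_mulmx m k (M : 'M[R]_(m, k)) (v : 'cV[R]_k) :
  enorm (M *m v) <= enorm M * enorm v.
Proof.
rewrite -(@ler_pXn2r _ 2) ?nnegrE ?mulr_ge0 ?enorm_ge0 // exprMn !enorm_sqr.
rewrite mxdot_row_sum [mxdot M M]mxdot_row_sum mulr_suml; apply: ler_sum => i _.
have -> : mxdot (row i (M *m v)) (row i (M *m v)) = mxdot (row i M) v^T ^+ 2.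
  rewrite /mxdot !big_ord1 expr2; congr (_ * _); rewrite !mxE;
  by apply: eq_bigr => j _; rewrite !mxE.
by apply: le_trans (mxdot_sqr_le _ _) _; rewrite !enorm_sqr mxdot_tr.
Qed.

Lemma enorm_mulmx_bound m k l (M : 'M[R]_(m, k)) (A : 'M[R]_(k, l)) (b : R) :
  0 <= b -> (forall v : 'cV[R]_k, enorm (M *m v) <= b * enorm v) ->
  enorm (M *m A) <= b * enorm A.
Proof.
move=> b0 Mb; rewrite -(@ler_pXn2r _ 2) ?nnegrE ?mulr_ge0 ?enorm_ge0 // exprMn.
rewrite !enorm_sqr mxdot_col_sum [mxdot A A]mxdot_col_sum mulr_sumr.
apply: ler_sum => j _; rewrite !colE -mulmxA -colE -!enorm_sqr -exprMn.
by rewrite ler_pXn2r ?nnegrE ?mulr_ge0 ?enorm_ge0.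
Qed.

(* The left-hand side is the squared norm of (M ⊗ I_p) applied to the blocks Z. *)
Lemma sum_enorm_mix_le n p (M : 'M[R]_n) (Z : 'I_n -> 'rV[R]_p) (b : R) :
  0 <= b -> (forall v : 'cV[R]_n, enorm (M *m v) <= b * enorm v) ->
  \sum_(i < n) enorm (\sum_(j < n) M i j *: Z j) ^+ 2
    <= b ^+ 2 * \sum_(j < n) enorm (Z j) ^+ 2.
Proof.
move=> b0 Mb.
have -> : \sum_(i < n) enorm (\sum_(j < n) M i j *: Z j) ^+ 2
          = enorm (M *m \matrix_j Z j) ^+ 2.
  rewrite enorm_sqr mxdot_row_sum; apply: eq_bigr => i _.
  rewrite -enorm_sqr row_mul mulmx_sum_row; congr (enorm _ ^+ 2).
  by apply: eq_bigr => j _; rewrite rowK mxE.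
have -> : \sum_(j < n) enorm (Z j) ^+ 2 = enorm (\matrix_j Z j) ^+ 2.
  by rewrite enorm_sqr mxdot_row_sum; apply: eq_bigr => j _; rewrite rowK enorm_sqr.
rewrite -exprMn ler_pXn2r ?nnegrE ?mulr_ge0 ?enorm_ge0 //.
exact: enorm_mulmx_bound.
Qed.

Section SpectralNorm.
Variables (n : nat) (M : 'M[R]_n).

Lemma specnorm_ub :
  ubound [set enorm (M *m v) | v in [set v : 'cV[R]_n | enorm v <= 1]] (specnorm M).
Proof.
apply: ub_le_sup; exists (enorm M) => _ [v /= v1 <-].
by apply: le_trans (enorm_mulmx M v) _; rewrite ler_piMr ?enorm_ge0.
Qed.

Lemma specnorm_ge0 : 0 <= specnorm M.
Proof.
have := @specnorm_ub (enorm (M *m (0 : 'cV[R]_n))); rewrite mulmx0 enorm0; apply.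
by exists 0; rewrite /= ?mulmx0 enorm0.
Qed.

Lemma enorm_mulmx_specnorm (v : 'cV[R]_n) : enorm (M *m v) <= specnorm M * enorm v.
Proof.
have [/enorm_eq0 ->|vn0] := eqVneq (enorm v) 0; first by rewrite mulmx0 !enorm0 mulr0.
have v_gt0 : 0 < enorm v by rewrite lt_def vn0 enorm_ge0.
have v1 : enorm ((enorm v)^-1 *: v) = 1.
  by rewrite enormZ ger0_norm ?invr_ge0 ?enorm_ge0 // mulVf.
have Mu : enorm (M *m ((enorm v)^-1 *: v)) <= specnorm M.
  by apply: specnorm_ub; exists ((enorm v)^-1 *: v); rewrite /= ?v1.
rewrite -scalemxAr enormZ ger0_norm ?invr_ge0 ?enorm_ge0 // in Mu.
by rewrite -ler_pdivrMr // mulrC.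
Qed.

Lemma enorm_mulmx_exp_specnorm s (v : 'cV[R]_n) :
  enorm (M ^+ s *m v) <= specnorm M ^+ s * enorm v.
Proof.
elim: s v => [|s IH] v; first by rewrite expr0 mul1mx mul1r.
rewrite exprS -mulmxE -mulmxA exprS -mulrA.
apply: le_trans (enorm_mulmx_specnorm _) _.
by rewrite ler_wpM2l ?specnorm_ge0.
Qed.

End SpectralNorm.
End MatrixNorms.

Definition avgmx {R : realType} (n : nat) : 'M[R]_n := n%:R^-1 *: const_mx 1.

Section DoublyStochastic.
Context {R : realType} {n : nat} (W : 'M[R]_n).
Hypothesis W_ds : doubly_stochastic W.
Local Notation J := (avgmx n : 'M[R]_n).

Lemma colsum_exp t j : \sum_(i < n) (W ^+ t) i j = 1.
Proof.
case: W_ds => _ [_ colsum].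
elim: t => [|t IH].
  rewrite (bigD1 j) //= big1 => [|i /negPf ij]; rewrite !mxE ?eqxx ?ij ?addr0 //.
rewrite exprS -mulmxE.
under eq_bigr do rewrite mxE.
by rewrite exchange_big /= -IH; apply: eq_bigr => k _; rewrite -mulr_suml colsum mul1r.
Qed.

Lemma mul_avgmxl : J * W = J.
Proof.
case: W_ds => _ [_ colsum]; apply/matrixP => i j; rewrite -mulmxE mxE.
under eq_bigr do rewrite !mxE mulr1.
by rewrite -mulr_sumr colsum mulr1 !mxE mulr1.
Qed.

Lemma mul_avgmxr : W * J = J.
Proof.
case: W_ds => _ [rowsum _]; apply/matrixP => i j; rewrite -mulmxE mxE.
under eq_bigr do rewrite !mxE mulr1.
by rewrite -mulr_suml rowsum mul1r !mxE mulr1.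
Qed.

Lemma avgmx_idem : J * J = J.
Proof.
case: (posnP n) => [n0|n_gt0].
  by apply/matrixP => i; move: (ltn_ord i); rewrite {2}n0.
apply/matrixP => i j; rewrite -mulmxE mxE.
under eq_bigr do rewrite !mxE !mulr1.
rewrite sumr_const card_ord !mxE mulr1 -mulr_natl.
by field; rewrite pnatr_eq0 -lt0n.
Qed.

Lemma sub_avgmx_exp t : (W - J) ^+ t.+1 = W ^+ t.+1 - J.
Proof.
have expJ s : W ^+ s * J = J.
  by elim: s => [|s IH]; rewrite ?mul1r // exprS -mulrA IH mul_avgmxr.
elim: t => [|t IH]; first by rewrite !expr1.
rewrite exprSr IH mulrBl !mulrBr -exprSr expJ mul_avgmxl avgmx_idem.
by rewrite subrr subr0.
Qed.

End DoublyStochastic.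

Lemma dotp_mxdot {R : realType} {p : nat} (u v : 'rV[R]_p) : dotp u v = mxdot u v.
Proof. by rewrite /mxdot big_ord1. Qed.

(* Unlike [is_gradient], this is visibly stable under averaging, and it is all that
   the descent and convexity arguments below use. *)
Definition line_gradient {R : realType} {p : nat}
    (F : 'rV[R]_p -> R) (G : 'rV[R]_p -> 'rV[R]_p) : Prop :=
  forall x v (s : R), is_derive s 1 (fun s => F (s *: v + x)) (dotp (G (s *: v + x)) v).

Lemma cvg_dnbhs_at_right {R : realType} (q : R -> R) (a l : R) :
  q x @[x --> a^'] --> l -> q x @[x --> a^'+] --> l.
Proof.
apply: cvg_trans => A [e /= e0 He]; exists e => //= y /He Ay ay.
by apply: Ay; rewrite gt_eqF.
Qed.

Section ConvexSmooth.
Context {R : realType} {p : nat}.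
Implicit Types (F : 'rV[R]_p -> R) (G : 'rV[R]_p -> 'rV[R]_p).

Lemma is_gradient_line F G : is_gradient F G -> line_gradient F G.
Proof.
move=> FG x v s; have [dF dFE] := FG (s *: v + x).
have shiftE : (fun h : R => h^-1 *: (((fun s => F (s *: v + x)) \o shift s) (h *: 1)
                                     - F (s *: v + x)))
    = (fun h : R => h^-1 *: ((F \o shift (s *: v + x)) (h *: v) - F (s *: v + x))).
  apply/funext => h /=; congr (_ *: (F _ - _)).
  by rewrite [_%:A]mulr1 scalerDl addrA.
apply: DeriveDef; first by rewrite /derivable shiftE; apply: diff_derivable.
by rewrite /derive shiftE -/(derive F (s *: v + x) v) deriveE.
Qed.

Lemma line_gradient_avg n (Fi : 'I_n -> 'rV[R]_p -> R) (Gi : 'I_n -> 'rV[R]_p -> 'rV[R]_p) :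
  (forall i, line_gradient (Fi i) (Gi i)) ->
  line_gradient (fun z => n%:R^-1 * \sum_(i < n) Fi i z)
                (fun z => n%:R^-1 *: \sum_(i < n) Gi i z).
Proof.
move=> FGi x v s.
have -> : (fun s => n%:R^-1 * \sum_(i < n) Fi i (s *: v + x)) =
          n%:R^-1 \*: \sum_(i < n) (fun s : R => Fi i (s *: v + x)).
  by apply/funext => y /=; rewrite fct_sumE.
apply: is_derive_eq (is_deriveZ _ (is_derive_sum (fun i => FGi i x v s))) _.
rewrite dotp_mxdot mxdotZl mxdot_suml /GRing.scale /=; congr (_ * _).
by apply: eq_bigr => i _; rewrite dotp_mxdot.
Qed.

Lemma descent_lemma F G L : line_gradient F G -> smooth_grad G L ->
  forall x v, F (v + x) <= F x + mxdot (G x) v + L / 2 * enorm v ^+ 2.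
Proof.
move=> FG GL x v.
set D := mxdot (G x) v; set K := L / 2 * enorm v ^+ 2.
pose psi := (fun s => F (s *: v + x)) - ( *:%R D) - K \*: (@id R ^+ 2).
have dpsi c : is_derive c (1 : R) psi (mxdot (G (c *: v + x)) v - D - K * (2 * c)).
  have FGc := FG x v c; apply: is_derive_eq.
  by rewrite expr1 /GRing.scale /= !mulr1 dotp_mxdot.
have [c /[!in_itv] /= /andP[c0 c1] psiE] :
    exists2 c, c \in `]0, 1[ &
      psi 1 - psi 0 = (mxdot (G (c *: v + x)) v - D - K * (2 * c)) * (1 - 0).
  apply: MVT => //; apply: derivable_within_continuous => y _.
  exact: (@ex_derive _ _ _ _ _ _ _ (dpsi y)).
have Gc : mxdot (G (c *: v + x)) v - D <= L * c * enorm v ^+ 2.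
  rewrite /D -mxdotBl; apply: le_trans (mxdot_le _ _) _.
  have := GL (c *: v + x) x; rewrite addrK enormZ (ger0_norm (ltW c0)) mulrA => Lc.
  by rewrite expr2 mulrA ler_wpM2r ?enorm_ge0.
have psi_val s : psi s = F (s *: v + x) - D * s - K * (s * s) by [].
move: psiE; rewrite !psi_val !(scale0r, add0r, scale1r, mul0r, mulr0, mulr1, subr0).
rewrite /K; lra.
Qed.

Lemma convex_gradient_le F G : line_gradient F G -> convex_fun F ->
  forall x y, F x + mxdot (G x) (y - x) <= F y.
Proof.
move=> FG Fconv x y.
(* For 0 < h < 1 convexity bounds the difference quotient at x in direction y - x
   by F y - F x; let h tend to 0 from the right. *)
have [dF dFE] := FG x (y - x) 0; rewrite scale0r add0r dotp_mxdot in dFE.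
have slope : (fun h : R => h^-1 *: (((fun s => F (s *: (y - x) + x)) \o shift 0) (h *: 1)
                                    - F (0 *: (y - x) + x))) @ 0^'+ --> mxdot (G x) (y - x).
  by apply: cvg_dnbhs_at_right; rewrite -dFE.
rewrite -lerBrDl; apply: (cvgr_to_le slope); near=> h.
have h0 : 0 < h by near: h; apply: nbhs_right_gt.
have h1 : h < 1 by near: h; apply: nbhs_right_lt.
rewrite /= scale0r add0r /GRing.scale /= mulr1 addr0.
have -> : h *: (y - x) + x = h *: y + (1 - h) *: x.
  by rewrite scalerBr scalerBl scale1r addrA addrAC.
have Fh : F (h *: y + (1 - h) *: x) <= h * F y + (1 - h) * F x.
  by apply: Fconv; rewrite !ltW.
rewrite ler_pdivrMl //; lra.
Unshelve. all: by end_near.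
Qed.

Lemma convex_avg_le F : convex_fun F -> forall T (u : nat -> 'rV[R]_p), (0 < T)%N ->
  F (T%:R^-1 *: \sum_(k < T) u k) <= T%:R^-1 * \sum_(k < T) F (u k).
Proof.
move=> Fconv; elim=> // -[_ u _|T IH u _]; first by rewrite !big_ord1 invr1 scale1r mul1r.
set a : R := T.+1%:R / T.+2%:R.
have [T1_gt0 T2_gt0] : (0 : R) < T.+1%:R /\ (0 : R) < T.+2%:R by rewrite !ltr0n.
have aT1 : a * T.+1%:R^-1 = T.+2%:R^-1 by rewrite /a mulrAC mulfV ?gt_eqF // mul1r.
have a1 : 1 - a = T.+2%:R^-1.
  by rewrite /a -{1}(divff (lt0r_neq0 T2_gt0)) -mulrBl -natrB // subSnn mul1r.
have a_01 : 0 <= a <= 1.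
  by rewrite /a divr_ge0 ?(ltW T1_gt0) ?(ltW T2_gt0) //= ler_pdivrMr // mul1r ler_nat.
have -> : T.+2%:R^-1 *: \sum_(k < T.+2) u k
          = a *: (T.+1%:R^-1 *: \sum_(k < T.+1) u k) + (1 - a) *: u T.+1.
  by rewrite big_ord_recr /= scalerDr scalerA aT1 a1.
have -> : T.+2%:R^-1 * \sum_(k < T.+2) F (u k)
          = a * (T.+1%:R^-1 * \sum_(k < T.+1) F (u k)) + (1 - a) * F (u T.+1).
  by rewrite big_ord_recr /= mulrDr mulrA aT1 a1.
apply: le_trans (Fconv a _ _ a_01) _.
by rewrite lerD2r ler_wpM2l ?(andP a_01).1 ?IH.
Qed.

End ConvexSmooth.

Section InexactGradientStep.
Context {R : realType} {p : nat}.
Variables (F : 'rV[R]_p -> R) (G : 'rV[R]_p -> 'rV[R]_p) (L mu : R) (xs : 'rV[R]_p).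
Hypotheses (FG : line_gradient F G) (Fconv : convex_fun F) (GL : smooth_grad G L).
Hypotheses (mu_gt0 : 0 < mu) (muL : mu * L <= 1) (xs_min : forall y, F xs <= F y).

Lemma grad_min_eq0 : G xs = 0.
Proof.
have := descent_lemma FG GL xs (- mu *: G xs).
rewrite mxdotZr enormZ exprMn normrN (ger0_norm (ltW mu_gt0)) -enorm_sqr.
have := xs_min (- mu *: G xs + xs); set N := enorm (G xs) ^+ 2 => Fxs descent.
have N_ge0 : 0 <= N by rewrite sqr_ge0.
have step_small : mu * N * (mu * L) <= mu * N by rewrite ler_piMr // mulr_ge0 // ltW.
have /eqP : N = 0.
  apply/eqP; rewrite eq_le N_ge0 andbT -(pmulr_rle0 _ mu_gt0).
  nra.
by rewrite sqrf_eq0 => /eqP /enorm_eq0.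
Qed.

Lemma enorm_grad_le y : enorm (G y) <= L * enorm (y - xs).
Proof. by have := GL y xs; rewrite grad_min_eq0 subr0. Qed.

Section Step.
Variables (y e y' : 'rV[R]_p).
Hypothesis y'E : y' = y - mu *: (G y + e).

Lemma inexact_step :
  F y' - F xs <= (enorm (y - xs) ^+ 2 - enorm (y' - xs) ^+ 2) / (2 * mu)
                 + 2 * enorm (y - xs) * enorm e + mu * enorm e ^+ 2.
Proof.
set w := y - xs; set r := enorm w; set E := enorm e.
set gg := mxdot (G y) (G y); set ge := mxdot (G y) e; set a := mxdot (G y) w.
set q := mxdot e w; set X := gg + 2 * ge + E ^+ 2.
have dX : enorm (G y + e) ^+ 2 = X.
  by rewrite /X /gg /ge /E !enorm_sqr mxdotDl !mxdotDr (mxdotC e (G y)); ring.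
have X_ge0 : 0 <= X by rewrite -dX sqr_ge0.
have descent : F y' <= F y - mu * (gg + ge) + L / 2 * mu ^+ 2 * X.
  have := descent_lemma FG GL y (- mu *: (G y + e)).
  rewrite mxdotZr enormZ exprMn normrN (ger0_norm (ltW mu_gt0)) dX scaleNr addrC -y'E.
  by rewrite mxdotDr -/gg -/ge mulNr; lra.
have smallL : L / 2 * mu ^+ 2 * X <= mu / 2 * X.
  rewrite (_ : L / 2 * mu ^+ 2 * X = (mu / 2 * X) * (mu * L)); last by ring.
  by rewrite ler_piMr // mulr_ge0 // divr_ge0 // ltW.
have convex : F y - a <= F xs.
  have := convex_gradient_le FG Fconv y xs.
  by rewrite -opprB -/w -scaleN1r mxdotZr -/a; lra.
have dist' : enorm (y' - xs) ^+ 2 = r ^+ 2 - 2 * mu * (a + q) + mu ^+ 2 * X.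
  by rewrite y'E addrAC -/w enorm_subZ_sqr dX mxdotDl -/a -/q.
have cross_q : - q <= r * E by rewrite -mxdotNl mulrC /E -(enormN e) mxdot_le.
have cross_ge : mu * ge <= r * E.
  have : ge <= L * r * E.
    by apply: le_trans (mxdot_le _ _) _; rewrite ler_wpM2r ?enorm_ge0 ?enorm_grad_le.
  move/(ler_wpM2l (ltW mu_gt0)) => /le_trans; apply.
  rewrite (_ : mu * (L * r * E) = r * E * (mu * L)); last by ring.
  by rewrite ler_piMr ?mulr_ge0 ?enorm_ge0.
rewrite dist' (_ : (r ^+ 2 - (r ^+ 2 - 2 * mu * (a + q) + mu ^+ 2 * X)) / (2 * mu)
                  = a + q - mu / 2 * X); last by field; rewrite gt_eqF.
by move: descent smallL convex cross_q cross_ge; rewrite /X; lra.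
Qed.

Lemma inexact_step_dist : enorm (y' - xs) <= enorm (y - xs) + 2 * mu * enorm e.
Proof.
have := inexact_step; have := xs_min y'.
set r := enorm (y - xs); set r' := enorm (y' - xs); set E := enorm e => Fy' step.
have [r_ge0 r'_ge0 E_ge0] : [/\ 0 <= r, 0 <= r' & 0 <= E] by split; apply: enorm_ge0.
have rhs_ge0 : 0 <= r + 2 * mu * E by rewrite addr_ge0 // !mulr_ge0 // ltW.
rewrite -(@ler_pXn2r _ 2) ?nnegrE //.
have : 0 <= r ^+ 2 - r' ^+ 2 + 2 * mu * (2 * r * E + mu * E ^+ 2).
  rewrite (_ : r ^+ 2 - r' ^+ 2 + _ = 2 * mu * ((r ^+ 2 - r' ^+ 2) / (2 * mu)
             + 2 * r * E + mu * E ^+ 2)); last by field; rewrite gt_eqF.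
  by apply: mulr_ge0; [rewrite mulr_ge0 // ltW | lra].
have : 0 <= mu * mu * E * E by rewrite !mulr_ge0 // ltW.
nra.
Qed.

End Step.
End InexactGradientStep.

Lemma partial_sum_le_lim {R : realType} (u : R ^nat) :
  (forall k, 0 <= u k) -> cvgn (series u) ->
  forall k, \sum_(j < k) u j <= limn (series u).
Proof.
move=> u_ge0 u_cvg k.
have u_nd : nondecreasing_seq (series u).
  by apply: (@nondecreasing_series _ u xpredT 0) => j _ _; apply: u_ge0.
by have := nondecreasing_cvgn_le u_nd u_cvg k; rewrite /series /= big_mkord.
Qed.

Lemma discrete_gronwall {R : realType} (a b : nat -> R) (c : R) :
  0 <= c -> (forall k, 0 <= b k) -> (forall k, 0 <= a k) ->
  (forall k, a k.+1 <= (1 + c * b k) * a k) ->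
  forall k, a k <= a 0 * expR (c * \sum_(j < k) b j).
Proof.
move=> c_ge0 b_ge0 a_ge0 a_next; elim=> [|k IH].
  by rewrite big_ord0 mulr0 expR0 mulr1.
apply: le_trans (a_next k) _.
rewrite big_ord_recr /= mulrDr expRD mulrA [leRHS]mulrC.
by rewrite ler_pM ?addr_ge0 ?mulr_ge0 ?a_ge0 ?expR_ge1Dx.
Qed.

Section NearDGDPlus.
Variables (R : realType) (n p : nat) (W : 'M[R]_n).
Variables (fi : 'I_n -> 'rV[R]_p -> R) (g : 'I_n -> 'rV[R]_p -> 'rV[R]_p) (Li : 'I_n -> R).
Variables (mu : R) (t : nat -> nat) (x : nat -> 'I_n -> 'rV[R]_p) (xs : 'rV[R]_p).
Hypotheses (n_gt0 : (0 < n)%N) (W_ds : doubly_stochastic W).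
Hypotheses (g_grad : forall i, is_gradient (fi i) (g i)).
Hypotheses (Li_gt0 : forall i, 0 < Li i) (g_smooth : forall i, smooth_grad (g i) (Li i)).
Hypothesis f_conv : convex_fun (fun z => n%:R^-1 * \sum_(i < n) fi i z).
Hypothesis xs_min :
  forall y, n%:R^-1 * \sum_(i < n) fi i xs <= n%:R^-1 * \sum_(i < n) fi i y.
Hypotheses (mu_gt0 : 0 < mu) (mu_le : mu <= (\big[Num.max/0]_(i < n) Li i)^-1).
Hypothesis t_gt0 : forall k, (0 < t k)%N.
Hypothesis b_summable : cvgn (series (fun k => specnorm (W - avgmx n) ^+ t k)).
Hypothesis x_iter : near_dgd_plus W t mu g x.

Let f z := n%:R^-1 * \sum_(i < n) fi i z.
Let gradf z := n%:R^-1 *: \sum_(i < n) g i z.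
Let L := \big[Num.max/0]_(i < n) Li i.
Let b k := specnorm (W - avgmx n) ^+ t k.
Let xbar k := n%:R^-1 *: \sum_(i < n) x k i.
Let local_step k j := x k j - mu *: g j (x k j).
Let grad_err k := n%:R^-1 *: \sum_(j < n) g j (x k j) - gradf (xbar k).
Let dist k := enorm (xbar k - xs).
Let dev k := Num.sqrt (\sum_(i < n) enorm (x k i - xbar k) ^+ 2).

Let L_gt0 : 0 < L.
Proof. exact: lt_le_trans (Li_gt0 (Ordinal n_gt0)) (le_bigmax _ _ _). Qed.

Let muL : mu * L <= 1.
Proof. by rewrite -ler_pdivlMr ?L_gt0 // mul1r. Qed.

Let g_smooth_L i : smooth_grad (g i) L.
Proof.
move=> a c; apply: le_trans (g_smooth i a c) _.
by rewrite ler_wpM2r ?enorm_ge0 ?le_bigmax.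
Qed.

Let gradf_smooth : smooth_grad gradf L.
Proof.
move=> a c; rewrite /gradf -scalerBr -sumrB enormZ ger0_norm ?invr_ge0 ?ler0n //.
rewrite ler_pdivrMl ?ltr0n //; apply: le_trans (enorm_sum _ _ _) _.
apply: le_trans (ler_sum _ (fun i _ => g_smooth_L i a c)) _.
by rewrite sumr_const card_ord mulr_natl.
Qed.

Let f_line : line_gradient f gradf.
Proof. exact: line_gradient_avg (fun i => is_gradient_line (g_grad i)). Qed.

Let b_ge0 k : 0 <= b k.
Proof. exact/exprn_ge0/specnorm_ge0. Qed.

Let xbar_next_avg k : xbar k.+1 = n%:R^-1 *: \sum_(j < n) local_step k j.
Proof.
rewrite /xbar; congr (_ *: _); under eq_bigr do rewrite x_iter.
rewrite exchange_big /=; apply: eq_bigr => j _.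
by rewrite -scaler_suml colsum_exp // scale1r.
Qed.

Let xbar_next k : xbar k.+1 = xbar k - mu *: (gradf (xbar k) + grad_err k).
Proof.
have -> : gradf (xbar k) + grad_err k = n%:R^-1 *: \sum_(j < n) g j (x k j).
  by rewrite /grad_err addrC subrK.
rewrite xbar_next_avg /local_step sumrB -scaler_sumr scalerBr.
by rewrite !scalerA mulrC.
Qed.

Let consensus_next k i :
  x k.+1 i - xbar k.+1 = \sum_(j < n) ((W - avgmx n) ^+ t k) i j *: local_step k j.
Proof.
rewrite x_iter xbar_next_avg -/(local_step k _) -(prednK (t_gt0 k)) sub_avgmx_exp //.
under [RHS]eq_bigr do rewrite !mxE mulr1 scalerBl.
by rewrite [RHS]sumrB -scaler_sumr.
Qed.

Let dev_next k : dev k.+1 <= b k * Num.sqrt (\sum_(j < n) enorm (local_step k j) ^+ 2).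
Proof.
rewrite /dev; under eq_bigr do rewrite consensus_next.
have := sum_enorm_mix_le (local_step k) (b_ge0 k) (enorm_mulmx_exp_specnorm _ (t k)).
move/ler_wsqrtr/le_trans; apply.
by rewrite sqrtrM ?sqr_ge0 // sqrtr_sqr ger0_norm ?b_ge0.
Qed.

Let dev_ge0 k : 0 <= dev k.
Proof. exact: sqrtr_ge0. Qed.

Let dist_ge0 k : 0 <= dist k.
Proof. exact: enorm_ge0. Qed.

Let enorm_dev_le k i : enorm (x k i - xbar k) <= dev k.
Proof.
rewrite -[leLHS]ger0_norm ?enorm_ge0 // -sqrtr_sqr; apply: ler_wsqrtr.
by rewrite (bigD1 i) //= lerDl sumr_ge0 // => j _; rewrite sqr_ge0.
Qed.

Let c0 := enorm xs + mu * \sum_(j < n) enorm (g j xs).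

Let c0_ge0 : 0 <= c0.
Proof.
rewrite addr_ge0 ?enorm_ge0 // mulr_ge0 ?(ltW mu_gt0) //.
by apply: sumr_ge0 => j _; apply: enorm_ge0.
Qed.

Let local_step_le k j : enorm (local_step k j) <= 2 * dev k + 2 * dist k + c0.
Proof.
have -> : local_step k j
          = (x k j - xs) - mu *: (g j (x k j) - g j xs) + (xs - mu *: g j xs).
  by apply/matrixP => a c; rewrite /local_step !mxE; ring.
have near_xs : enorm (x k j - xs) <= dev k + dist k.
  have -> : x k j - xs = (x k j - xbar k) + (xbar k - xs) by rewrite addrA subrK.
  by apply: le_trans (enormD _ _) _; rewrite lerD2r enorm_dev_le.
have step_xs : enorm (mu *: (g j (x k j) - g j xs)) <= enorm (x k j - xs).
  rewrite enormZ (ger0_norm (ltW mu_gt0)).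
  apply: le_trans (ler_wpM2l (ltW mu_gt0) (g_smooth_L _ _ _)) _.
  by rewrite mulrA ler_piMl ?enorm_ge0 ?muL.
have at_xs : enorm (xs - mu *: g j xs) <= c0.
  apply: le_trans (enormD _ _) _; rewrite enormN lerD2l enormZ (ger0_norm (ltW mu_gt0)).
  rewrite ler_wpM2l ?(ltW mu_gt0) // (bigD1 j) //= lerDl.
  by apply: sumr_ge0 => i _; apply: enorm_ge0.
apply: le_trans (enormD _ _) _; apply: le_trans (lerD (enormD _ _) at_xs) _.
by rewrite enormN; lra.
Qed.

Let dev_next_le k : dev k.+1 <= b k * (n%:R * (2 * dev k + 2 * dist k + c0)).
Proof.
apply: le_trans (dev_next k) _; rewrite ler_wpM2l ?b_ge0 //.
set B := 2 * dev k + 2 * dist k + c0.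
have B_ge0 : 0 <= B.
  by rewrite /B; have := dev_ge0 k; have := dist_ge0 k; have := c0_ge0; lra.
rewrite -(@ler_pXn2r _ 2) ?nnegrE ?sqrtr_ge0 ?mulr_ge0 ?ler0n // sqr_sqrtr; last first.
  by rewrite sumr_ge0 // => j _; rewrite sqr_ge0.
have step_sqr j : enorm (local_step k j) ^+ 2 <= B ^+ 2.
  by rewrite ler_pXn2r ?nnegrE ?enorm_ge0 // local_step_le.
apply: le_trans (ler_sum _ (fun j _ => step_sqr j)) _.
rewrite sumr_const card_ord -[B ^+ 2 *+ n]mulr_natl exprMn ler_wpM2r ?sqr_ge0 //.
by rewrite expr2 ler_peMr ?ler0n // ler1n.
Qed.

Let grad_err_le k : enorm (grad_err k) <= L * dev k.
Proof.
rewrite /grad_err /gradf -scalerBr -sumrB enormZ ger0_norm ?invr_ge0 ?ler0n //.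
rewrite ler_pdivrMl ?ltr0n //; apply: le_trans (enorm_sum _ _ _) _.
have gj_le j : enorm (g j (x k j) - g j (xbar k)) <= L * dev k.
  by apply: le_trans (g_smooth_L _ _ _) _; rewrite ler_wpM2l ?enorm_dev_le // ltW // L_gt0.
apply: le_trans (ler_sum _ (fun j _ => gj_le j)) _.
by rewrite sumr_const card_ord mulr_natl.
Qed.

Let dist_next k : dist k.+1 <= dist k + 2 * mu * enorm (grad_err k).
Proof.
exact: (inexact_step_dist f_line f_conv gradf_smooth mu_gt0 muL xs_min (xbar_next k)).
Qed.

Let pot k := dist k + 2 * dev k + c0.

Let pot_next k : pot k.+1 <= (1 + 4 * n%:R * b k) * pot k.
Proof.
have err_small : 2 * mu * enorm (grad_err k) <= 2 * dev k.
  rewrite -mulrA ler_pM2l // (le_trans (ler_wpM2l (ltW mu_gt0) (grad_err_le k))) //.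
  by rewrite mulrA ler_piMl ?dev_ge0 ?muL.
have mix_small : b k * (n%:R * (2 * dev k + 2 * dist k + c0)) <= 2 * n%:R * b k * pot k.
  rewrite (_ : 2 * n%:R * b k * pot k = b k * (n%:R * (2 * pot k))); last by ring.
  rewrite ler_wpM2l ?b_ge0 // ler_wpM2l ?ler0n // /pot.
  by have := dev_ge0 k; have := dist_ge0 k; have := c0_ge0; lra.
have := dist_next k; have := dev_next_le k.
by rewrite /pot in mix_small *; lra.
Qed.

Let bsum := limn (series b).
Let pot_max := pot 0 * expR (4 * n%:R * bsum).

Let pot_ge0 k : 0 <= pot k.
Proof. by have := dev_ge0 k; have := dist_ge0 k; have := c0_ge0; rewrite /pot; lra. Qed.

Let pot_le k : pot k <= pot_max.
Proof.
have c_ge0 : 0 <= 4 * n%:R :> R by rewrite mulr_ge0 ?ler0n.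
apply: le_trans (discrete_gronwall c_ge0 b_ge0 pot_ge0 pot_next k) _.
rewrite ler_wpM2l ?pot_ge0 // ler_expR ler_wpM2l //.
exact: partial_sum_le_lim b_ge0 b_summable k.
Qed.

Let pot_max_ge0 : 0 <= pot_max.
Proof. exact: le_trans (pot_ge0 0) (pot_le 0). Qed.

Let bsum_ge0 : 0 <= bsum.
Proof. by have := partial_sum_le_lim b_ge0 b_summable 0; rewrite big_ord0. Qed.

Let dist_le k : dist k <= pot_max.
Proof. by have := pot_le k; have := dev_ge0 k; have := c0_ge0; rewrite /pot; lra. Qed.

Let dev_le k : dev k <= pot_max.
Proof.
have := pot_le k; have := dev_ge0 k; have := dist_ge0 k; have := c0_ge0.
by rewrite /pot; lra.
Qed.

Let dev_succ_le k : dev k.+1 <= 2 * n%:R * pot_max * b k.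
Proof.
apply: le_trans (dev_next_le k) _.
rewrite (_ : 2 * n%:R * pot_max * b k = b k * (n%:R * (2 * pot_max))); last by ring.
rewrite ler_wpM2l ?b_ge0 // ler_wpM2l ?ler0n //.
by have := pot_le k; have := dev_ge0 k; have := c0_ge0; rewrite /pot; lra.
Qed.

Let sum_dev_le T : \sum_(k < T) dev k <= dev 0 + 2 * n%:R * pot_max * bsum.
Proof.
have nP_ge0 : 0 <= 2 * n%:R * pot_max.
  by apply: mulr_ge0; [apply: mulr_ge0 | exact: pot_max_ge0].
case: T => [|T]; first by rewrite big_ord0 addr_ge0 ?dev_ge0 // mulr_ge0 // bsum_ge0.
rewrite big_ord_recl lerD2l; under eq_bigr do rewrite lift0.
apply: le_trans (ler_sum _ (fun (k : 'I_T) _ => dev_succ_le k)) _.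
by rewrite -mulr_sumr ler_wpM2l // partial_sum_le_lim // => k; apply: b_ge0.
Qed.

Let gap_err_le k :
  2 * dist k * enorm (grad_err k) + mu * enorm (grad_err k) ^+ 2
    <= 3 * pot_max * enorm (grad_err k).
Proof.
set E := enorm (grad_err k); have E_ge0 : 0 <= E := enorm_ge0 _.
have muE : mu * E <= pot_max.
  apply: le_trans (ler_wpM2l (ltW mu_gt0) (grad_err_le k)) _.
  by rewrite mulrA (le_trans _ (dev_le k)) // ler_piMl ?dev_ge0 ?muL.
have distE : dist k * E <= pot_max * E by rewrite ler_wpM2r ?dist_le.
have muE2 : mu * E ^+ 2 <= pot_max * E by rewrite expr2 mulrA ler_wpM2r.
by rewrite -mulrA; lra.
Qed.

Let sum_gap_succ_le T :
  \sum_(k < T) (f (xbar k.+1) - f xs)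
    <= dist 0 ^+ 2 / (2 * mu) + 3 * pot_max * \sum_(k < T) enorm (grad_err k).
Proof.
pose d k := dist k ^+ 2 / (2 * mu).
have step k : f (xbar k.+1) - f xs <= (d k - d k.+1) + 3 * pot_max * enorm (grad_err k).
  have := inexact_step f_line f_conv gradf_smooth mu_gt0 muL xs_min (xbar_next k).
  rewrite -/(dist k) -/(dist k.+1) /d mulrBl.
  by have := gap_err_le k; lra.
apply: le_trans (ler_sum _ (fun (k : 'I_T) _ => step k)) _.
rewrite big_split /= -mulr_sumr lerD2r.
rewrite -(big_mkord xpredT (fun k => d k - d k.+1)).
rewrite (@telescope_sumr_eq _ 0 T (fun k => - d k)) // => [|k _]; last first.
  by rewrite opprK addrC.
by rewrite opprK addrC lerBlDr lerDl /d divr_ge0 ?sqr_ge0 // mulr_ge0 // ltW.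
Qed.

Lemma sum_gap_bounded : exists C, forall T, \sum_(k < T) (f (xbar k) - f xs) <= C.
Proof.
exists (f (xbar 0) - f xs + (dist 0 ^+ 2 / (2 * mu)
        + 3 * pot_max * (L * (dev 0 + 2 * n%:R * pot_max * bsum)))) => T.
have sum_grad_err :
    \sum_(k < T) enorm (grad_err k) <= L * (dev 0 + 2 * n%:R * pot_max * bsum).
  apply: le_trans (ler_sum _ (fun (k : 'I_T) _ => grad_err_le k)) _.
  by rewrite -mulr_sumr ler_wpM2l ?sum_dev_le // ltW // L_gt0.
apply: le_trans (_ : _ <= \sum_(k < T.+1) (f (xbar k) - f xs)) _.
  by rewrite big_ord_recr /= lerDl subr_ge0 xs_min.
rewrite big_ord_recl lerD2l; under eq_bigr do rewrite lift0.
apply: le_trans (sum_gap_succ_le T) _; rewrite lerD2l ler_wpM2l //.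
by rewrite mulr_ge0 ?pot_max_ge0.
Qed.

End NearDGDPlus.

Unset Implicit Arguments.
Set Strict Implicit.

Theorem theorem2p4 (R : realType) (n p : nat) (W : 'M[R]_n)
  (fi : 'I_n -> 'rV[R]_p -> R) (g : 'I_n -> 'rV[R]_p -> 'rV[R]_p)
  (Li : 'I_n -> R) (mu : R) (t : nat -> nat) (x : nat -> 'I_n -> 'rV[R]_p) :
  doubly_stochastic W ->
  strongly_connected W ->
  (forall i, 0 < W i i) ->
  (forall i, is_gradient (fi i) (g i)) ->
  convex_fun (fun z => n%:R^-1 * \sum_(i < n) fi i z) ->
  (exists xs : 'rV[R]_p, forall y, n%:R^-1 * \sum_(i < n) fi i xs <= n%:R^-1 * \sum_(i < n) fi i y) ->
  (forall i, 0 < Li i) ->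
  (forall i, smooth_grad (g i) (Li i)) ->
  0 < mu -> mu <= (\big[Num.max/0]_(i < n) Li i)^-1 ->
  (forall k, (1 <= t k)%N) ->
  cvgn (series (fun k => specnorm (W - n%:R^-1 *: const_mx 1) ^+ t k)) ->
  near_dgd_plus W t mu g x ->
  let f := fun z => n%:R^-1 * \sum_(i < n) fi i z in
  let xbar := fun k => n%:R^-1 *: \sum_(i < n) x k i in
  exists fstar : R,
    (exists xs, f xs = fstar /\ forall y, fstar <= f y) /\
    exists C : R, 0 < C /\
      forall T : nat, (0 < T)%N ->
        T%:R * (f (T%:R^-1 *: \sum_(k < T) xbar k) - fstar) <= C.
Proof.
(* Strong connectivity and the self-loops only serve to make beta < 1, which the
   summability hypothesis already subsumes. *)
move=> W_ds _ _ g_grad f_conv [xs xs_min] Li_gt0 g_smooth mu_gt0 mu_le t_gt0 b_summable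
  x_iter f xbar.
exists (f xs); split; first by exists xs.
have [n0|n_gt0] := posnP n.
  by subst n; exists 1; split => // T _; rewrite /f !big_ord0 !mulr0 subrr mulr0.
have [C sum_gap] := sum_gap_bounded n_gt0 W_ds g_grad Li_gt0 g_smooth f_conv xs_min
  mu_gt0 mu_le t_gt0 b_summable x_iter.
exists (1 + `|C|); split => [|T T_gt0]; first by rewrite ltr_pwDl.
apply: le_trans (_ : _ <= \sum_(k < T) (f (xbar k) - f xs)) _.
  rewrite sumrB sumr_const card_ord -[f xs *+ T]mulr_natl mulrBr lerD2r.
  apply: le_trans (ler_wpM2l (ler0n _ T) (convex_avg_le f_conv xbar T_gt0)) _.
  by rewrite mulVKf // pnatr_eq0 -lt0n.
by apply: le_trans (sum_gap T) _; rewrite (le_trans (ler_norm C)) // lerDr.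
Qed.
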